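(* Let $G$ be a graph and $a\neq b$ vertices of $G$. Then $a$ and $b$ are twins (i.e. $N(a)\setminus\{b\}=N(b)\setminus\{a\}$) if and only if the eigenvalue support of $e_a-e_b$ with respect to the Laplacian of $G$ consists of one eigenvalue, which is an integer.
   Context: $N(v)$ denotes the neighbourhood of $v$. Let $L=\Delta-A$ be the Laplacian of $G$ with spectral decomposition $L=\sum_r\theta_rE_r$ ($\theta_r$ distinct eigenvalues, $E_r$ orthogonal projections onto eigenspaces). The eigenvalue support of $x$ is the set of $\theta_r$ with $E_rx\neq0$. *)

From HB Require Import structures.
From mathcomp Require Import all_boot all_order all_algebra.
Set Implicit Arguments. Unset Strict Implicit. Unset Printing Implicit Defensive.
Import Order.TTheory GRing.Theory Num.Theory.
Local Open Scope ring_scope.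

Definition simple_graph (n : nat) (adj : rel 'I_n) : Prop :=
  symmetric adj /\ irreflexive adj.

Definition nbhd (n : nat) (adj : rel 'I_n) (v : 'I_n) : {set 'I_n} :=
  [set w | adj v w].

Definition twins (n : nat) (adj : rel 'I_n) (a b : 'I_n) : Prop :=
  nbhd adj a :\ b = nbhd adj b :\ a.

Definition laplacian (R : pzRingType) (n : nat) (adj : rel 'I_n) : 'M[R]_n :=
  \matrix_(i, j) ((if i == j then #|nbhd adj i|%:R else 0) - (adj i j)%:R).

Definition std_vec (R : pzRingType) (n : nat) (a : 'I_n) : 'rV[R]_n :=
  delta_mx 0 a.

(* Orthogonal projection E_theta onto the eigenspace of M for theta, acting on
   row vectors: projection onto the eigenspace V along its orthogonal
   complement {u | u *m V^T = 0} = rowspace of kermx V^T. *)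
Definition eigproj (R : rcfType) (n : nat) (M : 'M[R]_n) (theta : R) : 'M[R]_n :=
  proj_mx (eigenspace M theta) (kermx (eigenspace M theta)^T).

Definition eig_support (R : rcfType) (n : nat) (M : 'M[R]_n) (x : 'rV[R]_n)
  : pred R :=
  fun theta => eigenvalue M theta && (x *m eigproj M theta != 0).

From HB Require Import structures.
From mathcomp Require Import all_boot all_order all_algebra.
From mathcomp Require Import polyrcf complex lra.
Import Order.TTheory GRing.Theory Num.Theory.
Local Open Scope ring_scope.

(* With x = e_a - e_b, the eigenvalue support of x is a single eigenvalue t
   exactly when x is itself an eigenvector of L for t: one direction because
   eigenvectors for distinct eigenvalues of a symmetric matrix are orthogonal,
   the other because the eigenspaces of a real symmetric matrix span the whole
   space, so x is recovered from its projection onto the t-eigenspace.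
   Comparing the entries of x L and t x outside {a, b} shows that x is an
   eigenvector iff a and b are twins, and the eigenvalue is then the integer
   deg a + (1 if a ~ b, else 0). *)

Set Implicit Arguments.
Unset Strict Implicit.
Unset Printing Implicit Defensive.

Section SymmetricMatrix.
Variables (F : fieldType) (n : nat) (M : 'M[F]_n).
Hypothesis sM : M^T = M.

Lemma stablemx_kermx_tr (S : 'M_n) : stablemx S M -> stablemx (kermx S^T) M.
Proof.
case/submxP => D SD; apply/sub_kermxP.
by rewrite -mulmxA -{1}sM -trmx_mul SD trmx_mul mulmxA mulmx_ker mul0mx.
Qed.

Lemma eigenvector_ortho_eigenspace m (W : 'M_(m, n)) s t :
  W *m M = s *: W -> s != t -> W *m (eigenspace M t)^T = 0.
Proof.
move=> WM st; have /eigenspaceP EM := submx_refl (eigenspace M t).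
have : s *: (W *m (eigenspace M t)^T) = t *: (W *m (eigenspace M t)^T).
  by rewrite scalemxAl -WM -mulmxA -{1}sM -trmx_mul EM linearZ /= scalemxAr.
by move/eqP; rewrite -subr_eq0 -scalerBl scaler_eq0 subr_eq0 (negbTE st) => /eqP.
Qed.
End SymmetricMatrix.

Lemma mulmx_tr_eq0 (R : realDomainType) m n (A : 'M[R]_(m, n)) :
  (A *m A^T == 0) = (A == 0).
Proof.
apply/idP/idP => [/eqP AAt0|/eqP->]; last by rewrite mul0mx.
apply/eqP/matrixP => i j; apply/eqP; move/matrixP/(_ i i)/eqP: AAt0.
rewrite !mxE psumr_eq0 => [/allP/(_ j (mem_index_enum j))|k _].
  by rewrite mxE -expr2 sqrf_eq0.
by rewrite mxE -expr2 sqr_ge0.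
Qed.

Section RealMatrix.
Variable R : realFieldType.

Lemma capmx_kermx_tr m n (A : 'M[R]_(m, n)) : (A :&: kermx A^T)%MS = 0.
Proof.
apply/eqP; rewrite -mulmx_tr_eq0; set C := (A :&: _)%MS.
have /submxP[D {2}->] : (C <= A)%MS := capmxSl _ _.
have /sub_kermxP CAt0 : (C <= kermx A^T)%MS := capmxSr _ _.
by rewrite trmx_mul mulmxA CAt0 mul0mx.
Qed.
End RealMatrix.

Section RealSymmetricMatrix.
Variable R : rcfType.
Local Notation toC := (real_complex R).

Lemma mul_row_conj_eq0 n (w : 'rV[R[i]]_n) :
  (w *m (map_mx conjc w)^T == 0) = (w == 0).
Proof.
apply/idP/idP => [/eqP/matrixP/(_ 0 0)|/eqP->]; last by rewrite mul0mx.
rewrite !mxE => /eqP; rewrite psumr_eq0 => [/allP w0|j _]; last first.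
  by rewrite !mxE -sqr_normc exprn_ge0.
apply/eqP/rowP => j; apply/eqP; have := w0 j (mem_index_enum j).
by rewrite !mxE -sqr_normc sqrf_eq0 normr_eq0.
Qed.

Lemma symmetric_eigenvalue_real n (M : 'M[R]_n) a :
  M^T = M -> eigenvalue (map_mx toC M) a -> a = toC (complex.Re a).
Proof.
move=> sM /eigenvalueP[w wM w_neq0].
set f := map_mx toC M in wM.
have fJ : map_mx conjc f = f by apply/matrixP => i j; rewrite !mxE conjc_real.
have fT : f^T = f by rewrite /f map_trmx sM.
have : a *: (w *m (map_mx conjc w)^T) = conjc a *: (w *m (map_mx conjc w)^T).
  rewrite scalemxAl -wM -mulmxA -{1}fT -trmx_mul -{1}fJ -map_mxM wM.
  by rewrite map_mxZ /= linearZ /= scalemxAr.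
move/eqP; rewrite -subr_eq0 -scalerBl scaler_eq0 mul_row_conj_eq0.
rewrite (negbTE w_neq0) orbF subr_eq0.
by case: a {wM} => a1 a2 /eqP[a2N]; congr (Complex _ _); lra.
Qed.

(* The complexification of M has an eigenvector inside U^C, its eigenvalue
   is real, and extending scalars does not change whether U meets the
   corresponding real eigenspace. *)
Lemma symmetric_stable_meets_eigenspace n (M U : 'M[R]_n) :
  M^T = M -> stablemx U M -> U != 0 -> exists mu, (U :&: eigenspace M mu != 0)%MS.
Proof.
move=> sM stU U_neq0.
set f := map_mx toC M; set V := map_mx toC U.
have stV : stablemx V f by rewrite -map_mxM map_submx.
have [a a_eig] : exists a, eigenvalue (restrict V f) a.
  by apply: Theorem7'; rewrite mxrank_map lt0n mxrank_eq0.
have /(symmetric_eigenvalue_real sM) a_real := eigenvalue_restrict stV a_eig.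
have /eigenvalueP[v /eigenspaceP] := a_eig.
rewrite eigenspace_restrict // a_real => v_eig v_neq0.
exists (complex.Re a); rewrite -(map_mx_eq0 toC) -submx0 map_capmx submx0.
rewrite map_eigenspace; apply/rowV0Pn; exists (v *m row_base V).
  rewrite sub_capmx v_eig andbT.
  by rewrite (submx_trans (submxMl _ _)) ?eq_row_base.
by rewrite mul_mx_rowfree_eq0 ?row_base_free.
Qed.

Lemma symmetric_ortho_eigenspaces_eq0 n (M : 'M[R]_n) (y : 'rV_n) :
  M^T = M -> (forall t, y *m (eigenspace M t)^T = 0) -> y = 0.
Proof.
move=> sM y_ortho; set r := rootsR (char_poly M).
set S := (\sum_(i < size r) eigenspace M r`_i)%MS.
have eigS mu : eigenvalue M mu -> (eigenspace M mu <= S)%MS.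
  rewrite eigenvalue_root_char => mu_root.
  have mu_r : mu \in r.
    by rewrite -roots_on_rootsR ?monic_neq0 ?char_poly_monic // in_itv /= mu_root.
  have mu_idx : (index mu r < size r)%N by rewrite index_mem.
  by apply: (sumsmx_sup (Ordinal mu_idx)); rewrite //= nth_index.
have stS : stablemx S M.
  by apply: stablemx_sums => i; apply: comm_mx_stable_eigenspace.
have y_ker : (y <= kermx S^T)%MS.
  apply/sub_kermxP/trmx_inj; rewrite trmx_mul trmxK trmx0; apply/sub_kermxP.
  apply/sumsmx_subP => i _; apply/sub_kermxP/trmx_inj.
  by rewrite trmx_mul trmxK trmx0 y_ortho.
have stK := stablemx_kermx_tr sM stS.
have [K0|/(symmetric_stable_meets_eigenspace sM stK)[mu cap_neq0]] :=
  eqVneq (kermx S^T) 0.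
  by apply/eqP; rewrite -submx0 -K0.
case/negP: (cap_neq0); rewrite -submx0 -(capmx_kermx_tr S).
rewrite sub_capmx capmxSl (submx_trans (capmxSr _ _)) // eigS //.
by apply: contraNneq cap_neq0 => ->; rewrite capmx0.
Qed.
End RealSymmetricMatrix.

Section EigenProjection.
Variables (R : rcfType) (n : nat) (M : 'M[R]_n) (t : R).
Local Notation E := (eigenspace M t).
Local Notation P := (eigproj M t).

Let E_cap_ortho : (E :&: kermx E^T = 0)%MS := capmx_kermx_tr E.

Lemma eigproj_sub m (v : 'M_(m, n)) : (v *m P <= E)%MS.
Proof. exact: proj_mx_sub. Qed.

Lemma eigproj_id m (v : 'M_(m, n)) : (v <= E)%MS -> v *m P = v.
Proof. exact: proj_mx_id E_cap_ortho. Qed.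

Lemma eigproj_idem : P *m P = P.
Proof. exact: proj_mx_proj E_cap_ortho. Qed.

Lemma eigproj_eq0 m (v : 'M_(m, n)) : (v *m P == 0) = (v *m E^T == 0).
Proof.
have E_full : row_full (E + kermx E^T)%MS.
  rewrite /row_full mxrank_disjoint_sum // mxrank_ker mxrank_tr.
  by rewrite subnKC // rank_leq_col.
apply/eqP/eqP => [vP0|/sub_kermxP vE0]; last exact: proj_mx_0 E_cap_ortho vE0.
apply/sub_kermxP; rewrite -(add_proj_mx E_cap_ortho (submx_full v E_full)).
by rewrite /eigproj in vP0; rewrite vP0 add0r proj_mx_sub.
Qed.

End EigenProjection.

Lemma eig_support_pred1 (R : rcfType) n (M : 'M[R]_n) (x : 'rV_n) t :
  M^T = M -> x != 0 -> eig_support M x =1 pred1 t <-> x *m M = t *: x.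
Proof.
move=> sM x_neq0; split=> [supp_x | xM theta]; last first.
  rewrite /eig_support /=; have [->|theta_t] := eqVneq theta t.
    have /eigproj_id -> : (x <= eigenspace M t)%MS by apply/eigenspaceP.
    by rewrite x_neq0 andbT; apply/eigenvalueP; exists x.
  by rewrite eigproj_eq0 (eigenvector_ortho_eigenspace sM xM) ?eqxx ?andbF // eq_sym.
have xPM : x *m eigproj M t *m M = t *: (x *m eigproj M t).
  by apply/eigenspaceP; apply: eigproj_sub.
suff x_xP : x - x *m eigproj M t = 0 by rewrite (subr0_eq x_xP).
apply: (symmetric_ortho_eigenspaces_eq0 sM) => theta; apply/eqP.
have [->|theta_t] := eqVneq theta t.
  by rewrite -eigproj_eq0 mulmxBl -mulmxA eigproj_idem subrr.
have x_ortho : x *m (eigenspace M theta)^T = 0.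
  move: (supp_x theta); rewrite /= (negbTE theta_t) /eig_support.
  case: (boolP (eigenvalue M theta)) => [_ /negbFE|].
    by rewrite eigproj_eq0 => /eqP.
  by rewrite negbK => /eqP -> _; rewrite trmx0 mulmx0.
by rewrite mulmxBl x_ortho (eigenvector_ortho_eigenspace sM xPM) ?subrr // eq_sym.
Qed.

Section LaplacianTwins.
Variables (R : nzRingType) (n : nat) (adj : rel 'I_n) (a b : 'I_n).
Hypotheses (adj_sym : symmetric adj) (adj_irr : irreflexive adj) (a_neq_b : a != b).
Local Notation L := (laplacian R adj).
Local Notation x := (std_vec R a - std_vec R b).

Lemma laplacian_tr : L^T = L.
Proof. by apply/matrixP => i j; rewrite !mxE eq_sym adj_sym; case: eqP => [->|]. Qed.

Lemma std_vec_diff_neq0 : x != 0.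
Proof.
apply/eqP => /rowP/(_ a); rewrite !mxE !eqxx (negbTE a_neq_b) subr0 => /eqP.
by rewrite oner_eq0.
Qed.

Lemma std_vec_diffE j : x 0 j = (j == a)%:R - (j == b)%:R.
Proof. by rewrite !mxE. Qed.

Lemma std_vec_diff_laplacianE j : (x *m L) 0 j =
  ((if a == j then #|nbhd adj a|%:R else 0) - (adj a j)%:R) -
  ((if b == j then #|nbhd adj b|%:R else 0) - (adj b j)%:R).
Proof. by rewrite mulmxBl /std_vec -!rowE !mxE. Qed.

Lemma twins_laplacian_eigenvector :
  twins adj a b -> x *m L = (#|nbhd adj a| + adj a b)%:R *: x.
Proof.
move=> ab_twins.
have deg_ab : #|nbhd adj a| = #|nbhd adj b|.
  by rewrite (cardsD1 b) (cardsD1 a (nbhd adj b)) ab_twins !inE adj_sym.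
have b_neq_a : b != a by rewrite eq_sym.
apply/rowP => j; rewrite std_vec_diff_laplacianE [RHS]mxE std_vec_diffE.
have [->|j_neq_a] := eqVneq j a.
  rewrite (negbTE a_neq_b) (negbTE b_neq_a) adj_irr (adj_sym b a) natrD /=.
  by rewrite !subr0 sub0r opprK mulr1.
have [->|j_neq_b] := eqVneq j b.
  rewrite adj_irr deg_ab natrD /=.
  by rewrite !sub0r subr0 mulrN1 opprD addrC.
move: ab_twins => /setP/(_ j); rewrite !in_setD1 !inE j_neq_a j_neq_b /= => ->.
by rewrite !subrr mulr0.
Qed.

Lemma laplacian_eigenvector_twins t : x *m L = t *: x -> twins adj a b.
Proof.
move=> xL; apply/setP => j; rewrite !in_setD1 !inE.
have [->|j_neq_a] := eqVneq j a; first by rewrite adj_irr !andbF.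
have [->|j_neq_b] := eqVneq j b; first by rewrite adj_irr !andbF.
move/rowP/(_ j): xL; rewrite std_vec_diff_laplacianE [RHS]mxE std_vec_diffE.
rewrite [a == j]eq_sym [b == j]eq_sym (negbTE j_neq_a) (negbTE j_neq_b) /=.
rewrite subrr mulr0 !sub0r opprK => /eqP; rewrite addrC subr_eq0.
by case: (adj a j); case: (adj b j); rewrite //= ?oner_eq0 // eq_sym oner_eq0.
Qed.
End LaplacianTwins.

Theorem mainTheorem11 (R : rcfType) (n : nat) (adj : rel 'I_n) (a b : 'I_n) :
  simple_graph adj -> a != b ->
  (twins adj a b <->
   exists z : int, forall theta : R,
     eig_support (laplacian R adj) (std_vec R a - std_vec R b) theta
     = (theta == z%:~R)).
Proof.
move=> [adj_sym adj_irr] a_neq_b.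
have supportE := eig_support_pred1 _ (laplacian_tr R adj_sym)
  (std_vec_diff_neq0 R a_neq_b).
split=> [ab_twins | [z /supportE]].
  exists (#|nbhd adj a| + adj a b)%N.
  exact/supportE/twins_laplacian_eigenvector.
exact: laplacian_eigenvector_twins.
Qed.
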